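(* Let $\ell,c,d\in\mathbb{N}$ and let $\beta$ be a $(c,d)$-disjointed $\ell$-covering of a graph $G$. Then $\beta$ is $(c,f)$-disjointed, where $f(t):=d\,t^c$ for each $t\in\mathbb{N}$.
   Context: Graphs are finite, simple and undirected. For a set $B\subseteq V(G)$, $N_G(B)$ is the set of vertices of $G$ adjacent to some vertex of $B$ (so $N_G(\emptyset)=\emptyset$). An $\ell$-covering of $G$ is a set $\beta\subseteq 2^{V(G)}$ with $|B|\le \ell$ for all $B\in\beta$ and $\bigcup_{B\in\beta}B=V(G)$. For $c\in\mathbb{N}_0$ and $d\ge 0$, a covering $\beta$ is $(c,d)$-disjointed if for every $c$-tuple $(B_1,\dots,B_c)\in\beta^c$ and every connected component $X$ of $G-(B_1\cup\dots\cup B_c)$ there is $Q\subseteq V(X)$ with $|Q|\le d$ such that for every connected component $Y$ of $X-Q$ there is $i\in\{1,\dots,c\}$ with $V(Y)\cap N_G(B_i')=\emptyset$, where $B_i':=B_i\setminus(B_1\cup\dots\cup B_{i-1})$. For $t\in\mathbb{N}$, $\beta[t]:=\{\bigcup\mathcal{B} : \mathcal{B}\subseteq\beta, |\mathcal{B}|\le t\}$. For $f:\mathbb{N}\to\mathbb{R}^+$, $\beta$ is $(c,f)$-disjointed if $\beta[t]$ is $(c,f(t))$-disjointed for every $t\in\mathbb{N}$. *)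

From mathcomp Require Import all_boot.
Set Implicit Arguments. Unset Strict Implicit. Unset Printing Implicit Defensive.

Definition simple_graph (T : finType) (e : rel T) : Prop :=
  symmetric e /\ irreflexive e.

Section Defs.
Variables (T : finType) (e : rel T).

Definition induced_rel (U : {set T}) : rel T :=
  fun x y => [&& e x y, x \in U & y \in U].

Definition is_component (U X : {set T}) : Prop :=
  exists2 x, x \in U & X = [set y | connect (induced_rel U) x y].

Definition nbh (B : {set T}) : {set T} := [set v | [exists u in B, e u v]].

Definition covering (l : nat) (beta : {set {set T}}) : Prop :=
  (forall B, B \in beta -> #|B| <= l) /\ cover beta = [set: T].

Definition Bprime (c : nat) (Bs : 'I_c -> {set T}) (i : 'I_c) : {set T} :=
  Bs i :\: \bigcup_(j < c | j < i) Bs j.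

Definition cd_disjointed (c d : nat) (beta : {set {set T}}) : Prop :=
  forall Bs : 'I_c -> {set T}, (forall i, Bs i \in beta) ->
  forall X, is_component (~: \bigcup_(i < c) Bs i) X ->
  exists Q : {set T}, [/\ Q \subset X, #|Q| <= d &
    forall Y, is_component (X :\: Q) Y ->
      exists i : 'I_c, [disjoint Y & nbh (Bprime Bs i)]].

Definition beta_t (beta : {set {set T}}) (t : nat) : {set {set T}} :=
  [set cover S | S in [set S0 in powerset beta | #|S0| <= t]].

Definition cf_disjointed (c : nat) (f : nat -> nat) (beta : {set {set T}}) : Prop :=
  forall t, 0 < t -> cd_disjointed c (f t) (beta_t beta t).

End Defs.

From mathcomp Require Import all_boot.
Set Implicit Arguments. Unset Strict Implicit. Unset Printing Implicit Defensive.

(* Write each B_i in beta[t] as the union of a set S_i of at most t members of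
   beta.  Every choice function A with A_i in S_i has A_i inside B_i, so the
   component X of G - (B_1 u ... u B_c) lies in a component of G - (A_1 u ...
   u A_c), which the (c,d)-disjointedness of beta cuts with some Q_A of size
   at most d.  Taking Q to be the trace on X of the union of the Q_A over all
   at most t^c choices works: if a component Y of X - Q touched N(B_i') for
   every i, pick for each i the member A_i of S_i containing the touching
   vertex of B_i'; that vertex lies in A_i', and Y sits inside a component of
   the complement of Q_A, contradicting the choice of Q_A. *)

Lemma card_family_le (aT rT : finType) (F : aT -> {set rT}) t :
  (forall x, #|F x| <= t) -> #|family F| <= t ^ #|aT|.
Proof.
move=> leFt; rewrite card_family foldrE big_image -prod_nat_const.
exact: leq_prod.
Qed.

Lemma card_bigcup_le (I T : finType) (P : {pred I}) (F : I -> {set T}) d :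
  (forall i, i \in P -> #|F i| <= d) -> #|\bigcup_(i in P) F i| <= #|P| * d.
Proof.
move=> leFd; rewrite -sum_nat_const; elim/big_rec2: _ => [|i n U Pi leUn].
  by rewrite cards0.
by rewrite (leq_trans (leq_card_setU _ _).1) ?leq_add ?leFd.
Qed.

Section Graph.
Variables (T : finType) (e : rel T).

Lemma component_sub (U U' X : {set T}) :
  is_component e U X -> U \subset U' ->
  exists2 X', is_component e U' X' & X \subset X'.
Proof.
move=> [x xU ->] sUU'; exists [set y | connect (induced_rel e U') x y].
  by exists x => //; apply: (subsetP sUU').
apply/subsetP=> y; rewrite !inE; apply: connect_sub => a b.
by case/and3P=> eab aU bU; apply: connect1; rewrite /induced_rel eab !(subsetP sUU').
Qed.

Lemma nbhS (A B : {set T}) : A \subset B -> nbh e A \subset nbh e B.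
Proof.
move=> sAB; apply/subsetP=> v; rewrite !inE => /exists_inP[u uA euv].
by apply/exists_inP; exists u; rewrite ?(subsetP sAB).
Qed.

Lemma nbh_cover_meet (P : {set {set T}}) (C Y : {set T}) :
  C \subset cover P -> ~~ [disjoint Y & nbh e C] ->
  exists2 A, A \in P & ~~ [disjoint Y & nbh e (A :&: C)].
Proof.
move=> sCP; rewrite -setI_eq0 => /set0Pn[y]; rewrite !inE.
case/andP=> yY /exists_inP[u uC euy].
have /bigcupP[A AP uA] := subsetP sCP u uC.
exists A => //; rewrite -setI_eq0; apply/set0Pn; exists y.
by rewrite !inE yY; apply/exists_inP; exists u; rewrite ?inE ?uA.
Qed.

Lemma Bprime_sub c (A Bs : 'I_c -> {set T}) i :
  (forall j, A j \subset Bs j) -> A i :&: Bprime Bs i \subset Bprime A i.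
Proof.
move=> sABs; apply/subsetP=> u; rewrite !inE => /andP[uA /andP[uBs _]].
rewrite uA andbT; apply: contra uBs => /bigcupP[j ji uAj].
by apply/bigcupP; exists j; rewrite ?(subsetP (sABs j)).
Qed.

Lemma beta_tP (beta : {set {set T}}) t B : B \in beta_t beta t ->
  exists S : {set {set T}}, [/\ S \subset beta, #|S| <= t & B = cover S].
Proof.
by move=> /imsetP[S]; rewrite inE powersetE => /andP[sSbeta leSt] ->; exists S.
Qed.

Definition separated c (Bs : 'I_c -> {set T}) (X Q : {set T}) : Prop :=
  forall Y, is_component e (X :\: Q) Y ->
    exists i : 'I_c, [disjoint Y & nbh e (Bprime Bs i)].

Section Refinement.
Variables (c d : nat) (beta : {set {set T}}).
Variables (S : 'I_c -> {set {set T}}) (Bs : 'I_c -> {set T}).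
Hypothesis beta_disjointed : cd_disjointed e c d beta.
Hypothesis S_beta : forall i, S i \subset beta.
Hypothesis Bs_cover : forall i, Bs i = cover (S i).

Lemma family_sub (A : {ffun 'I_c -> {set T}}) i :
  A \in family S -> A i \subset Bs i.
Proof. by move=> /familyP/(_ i) ASi; rewrite Bs_cover; apply: bigcup_sup ASi. Qed.

Lemma family_separator (X : {set T}) (A : {ffun 'I_c -> {set T}}) :
  is_component e (~: \bigcup_(i < c) Bs i) X -> A \in family S ->
  exists Q : {set T},
    #|Q| <= d /\ exists2 XA : {set T}, X \subset XA & separated A XA Q.
Proof.
move=> compX famA.
have sU : ~: (\bigcup_(i < c) Bs i) \subset ~: (\bigcup_(i < c) A i).
  rewrite setCS; apply/bigcupsP=> i _.
  exact: subset_trans (family_sub i famA) (bigcup_sup i isT).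
have [XA compXA sXXA] := component_sub compX sU.
have A_beta i : A i \in beta by apply: subsetP (S_beta i) _ (familyP famA i).
have [Q [_ leQd sepQ]] := beta_disjointed A_beta compXA.
by exists Q; split=> //; exists XA.
Qed.

Lemma refined_separator (X : {set T}) :
  is_component e (~: \bigcup_(i < c) Bs i) X ->
  exists Q : {set T},
    [/\ Q \subset X, #|Q| <= d * #|family S| & separated Bs X Q].
Proof.
move=> compX.
have /fin_all_exists[QA QA_sep] (A : {ffun 'I_c -> {set T}}) :
    exists Q : {set T}, A \in family S ->
      #|Q| <= d /\ exists2 XA : {set T}, X \subset XA & separated A XA Q.
  have [famA|_] := boolP (A \in family S); last by exists set0.
  by have [Q sepQ] := family_separator compX famA; exists Q.
set Q := X :&: \bigcup_(A in family S) QA A.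
exists Q; split; first exact: subsetIl.
  rewrite mulnC (leq_trans (subset_leq_card (subsetIr _ _))) //.
  by apply: card_bigcup_le => A /QA_sep[].
move=> Y compY.
have [/existsP[i disjY]|] := boolP [exists i, [disjoint Y & nbh e (Bprime Bs i)]].
  by exists i.
rewrite negb_exists => /forallP meetY; exfalso.
have /fin_all_exists2[f fS meetYf] i : exists2 A, A \in S i &
    ~~ [disjoint Y & nbh e (A :&: Bprime Bs i)].
  by apply: nbh_cover_meet (meetY i); rewrite -Bs_cover subsetDl.
pose A := [ffun i => f i].
have famA : A \in family S by apply/familyP=> i; rewrite ffunE fS.
have [_ [XA sXXA sepA]] := QA_sep A famA.
have sY : X :\: Q \subset XA :\: QA A.
  apply/subsetP=> x /setDP[xX xQ]; apply/setDP.
  split; first exact: subsetP sXXA x xX.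
  by apply: contra xQ => xQA; rewrite inE xX; apply/bigcupP; exists A.
have [Y' compY' sYY'] := component_sub compY sY.
have [i disjY'] := sepA Y' compY'.
move/negP: (meetYf i); apply; apply: disjointW sYY' _ disjY'; apply: nbhS.
by rewrite -[f i](ffunE f); apply: Bprime_sub => j; apply: family_sub.
Qed.

End Refinement.

End Graph.

Theorem lemma3p3 (T : finType) (e : rel T) (l c d : nat)
  (beta : {set {set T}}) :
  simple_graph e -> 0 < l -> 0 < c -> 0 < d ->
  covering l beta -> cd_disjointed e c d beta ->
  cf_disjointed e c (fun t => d * t ^ c) beta.
Proof.
move=> _ _ _ _ _ beta_disjointed t _ Bs Bs_beta_t X compX.
have /fin_all_exists[S S_cover] i := beta_tP (Bs_beta_t i).
have S_beta i : S i \subset beta by case: (S_cover i).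
have Bs_cover i : Bs i = cover (S i) by case: (S_cover i).
have [Q [sQX leQ sepQ]] := refined_separator beta_disjointed S_beta Bs_cover compX.
exists Q; split=> //; apply: leq_trans leQ (leq_mul (leqnn d) _).
rewrite -[c in t ^ c]card_ord; apply: card_family_le => i.
by case: (S_cover i).
Qed.
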